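(* Let $G$ be a connected $K_4$-free graph whose diamonds are mutually edge-disjoint. Then $$|E(G)|-|V(G)|-2t(G)+d(G)+1 \le p(G) \le |E(G)|-|V(G)|-t(G)+1.$$ Moreover, the first inequality is an equality if $G^-$ is connected, and the second inequality is an equality if $G^-$ has exactly $2t(G)-d(G)+1$ connected components.
   Context: All graphs are finite and simple. For an acyclic digraph $D$, the phylogeny graph $P(D)$ is the graph on $V(D)$ in which distinct vertices $u,v$ are adjacent if and only if $(u,v)\in A(D)$, or $(v,u)\in A(D)$, or there is a vertex $w$ with $(u,w),(v,w)\in A(D)$. A phylogeny digraph for a graph $G$ is an acyclic digraph $D$ such that $G$ is an induced subgraph of $P(D)$ and $D$ has no arc from a vertex of $V(D)\setminus V(G)$ to a vertex of $V(G)$. The phylogeny number $p(G)$ is the minimum of $|V(D)\setminus V(G)|$ over all phylogeny digraphs $D$ for $G$. A diamond is a subgraph isomorphic to $K_4$ minus one edge (two triangles sharing an edge). $t(G)$ is the number of triangles of $G$ and $d(G)$ the number of diamonds of $G$. A triangle edge is an edge lying on some triangle; $G^-$ is the graph obtained from $G$ by deleting all triangle edges (keeping all vertices). *)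

From HB Require Import structures.
From mathcomp Require Import all_boot all_order all_algebra.
From Stdlib Require Import ClassicalEpsilon.
Set Implicit Arguments. Unset Strict Implicit. Unset Printing Implicit Defensive.

(* A simple graph G is given by a finite vertex type T and a symmetric,
   irreflexive adjacency relation e : rel T. *)

Section Graphs.
Variable T : finType.
Variable e : rel T.

Definition is_clique (A : {set T}) : bool :=
  [forall x in A, forall y in A, (x != y) ==> e x y].

Definition edge_set : {set {set T}} :=
  [set A : {set T} | (#|A| == 2) && is_clique A].

Definition triangles : {set {set T}} :=
  [set A : {set T} | (#|A| == 3) && is_clique A].
Definition tcount : nat := #|triangles|.

Definition K4_free : Prop :=
  forall A : {set T}, #|A| = 4 -> ~~ is_clique A.

(* Diamonds: subgraphs isomorphic to K4 minus an edge, represented by their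
   edge set: 5 edges of G spanning exactly 4 vertices (any 5 distinct edges
   on 4 vertices form K4 minus one edge, and its vertex set is determined). *)
Definition diamonds : {set {set {set T}}} :=
  [set F : {set {set T}} |
     [&& F \subset edge_set, #|F| == 5 & #|\bigcup_(f in F) f| == 4]].
Definition dcount : nat := #|diamonds|.

Definition diamonds_edge_disjoint : Prop :=
  forall F1 F2, F1 \in diamonds -> F2 \in diamonds -> F1 != F2 ->
    [disjoint F1 & F2].

(* G^- : delete all triangle edges (edges lying on some triangle). *)
Definition triangle_edge (u v : T) : bool := e u v && [exists w, e u w && e v w].
Definition eminus : rel T := fun u v => e u v && ~~ triangle_edge u v.

Definition ncomp (r : rel T) : nat :=
  #|[set [set y | connect r x y] | x : T]|.

End Graphs.

Definition acyclic (V : finType) (D : rel V) : Prop :=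
  forall x y, D x y -> ~~ connect D y x.

(* Adjacency in the phylogeny graph P(D) (for distinct vertices). *)
Definition phylo_adj (V : finType) (D : rel V) (u v : V) : bool :=
  [|| D u v, D v u | [exists w, D u w && D v w]].

(* D is a phylogeny digraph for G = (T, e) with k extra vertices: its vertex
   set is V(G) plus k new vertices (T + 'I_k), D is acyclic, G is an induced
   subgraph of P(D), and no arc goes from a new vertex to a vertex of G. *)
Definition phylo_digraph (T : finType) (e : rel T) (k : nat)
    (D : rel (T + 'I_k)%type) : Prop :=
  [/\ acyclic D,
      forall u v : T, u != v -> e u v = phylo_adj D (inl u) (inl v) &
      forall (s : 'I_k) (t : T), ~~ D (inr s) (inl t) ].

Definition has_phylo_digraph (T : finType) (e : rel T) (k : nat) : Prop :=
  exists D : rel (T + 'I_k)%type, phylo_digraph e D.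

Definition phylogeny_number (T : finType) (e : rel T) : nat :=
  epsilon (inhabits 0%N)
    (fun p => has_phylo_digraph e p /\
              forall k, has_phylo_digraph e k -> (p <= k)%N).

(* Call the edges of G^- (those on no triangle) free edges, and let F be their
   number.  The theorem is linear arithmetic on three estimates.
   1. Counting (card_free_edges): no edge lies on three triangles, the edges
      on two triangles are the spines of the diamonds, one per diamond, so
      F + 3t = |E| + d.
   2. Lower bounds (lower_bounds): in a phylogeny digraph D with k extra
      vertices the closed in-neighbourhoods of the vertices of D are cliques
      of G.  Distinct vertices of D have as neighbourhood each free edge,
      a clique inside each triangle (through a private edge of it), and a
      single vertex (a source); or, instead of the last two kinds, one source
      per component of G^-.  Hence F + t + 1 <= |V| + k and
      F + c(G^-) <= |V| + k.
   3. Upper bound: a greedy ordering from a root makes every vertex outside a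
      small exceptional set Z the top of a free edge or triangle of earlier
      vertices (greedy_ranking); a digraph realising the free edges and
      triangles then has at most F + t + |Z| - |V| extra vertices
      (upper_bound).
      A charging argument (diamond_charge) gives |Z| + d <= t + 1, and
      |Z| <= 1 when G^- is connected. *)

From HB Require Import structures.
From mathcomp Require Import all_boot all_order all_algebra.
From mathcomp Require Import zify.
From Stdlib Require Import Classical ClassicalEpsilon.
Set Implicit Arguments. Unset Strict Implicit. Unset Printing Implicit Defensive.

Lemma card_subset_eq (U : finType) (A B : {set U}) :
  A \subset B -> #|B| <= #|A| -> A = B.
Proof. by move=> sAB cBA; apply/eqP; rewrite eqEcard sAB cBA. Qed.

Lemma card_sep_sum (U : finType) (A : {set U}) (P : pred U) :
  #|[set x in A | P x]| = \sum_(x in A) (P x : nat).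
Proof.
rewrite -sum1_card big_mkcond /= [RHS]big_mkcond /=.
by apply: eq_bigr => x _; rewrite inE; case: (x \in A); case: (P x).
Qed.

Lemma leq_card_rel (U X : finType) (A : {set U}) (R : U -> X -> bool) :
  (forall a, a \in A -> exists x, R a x) ->
  (forall a a' x, a \in A -> a' \in A -> R a x -> R a' x -> a = a') ->
  #|A| <= #|[set x | [exists a in A, R a x]]|.
Proof.
move=> ex inj.
case: (set_0Vmem A) => [-> | [a0 a0A]]; first by rewrite cards0.
case: (ex a0 a0A) => x0 _.
pose f a := odflt x0 [pick x | R a x].
have fR a : a \in A -> R a (f a).
  move=> aA; rewrite /f; case: pickP => [x //|H].
  by case: (ex a aA) => x; rewrite H.
have finj : {in A &, injective f}.
  move=> a a' aA a'A fe; apply: (inj a a' (f a) aA a'A (fR a aA)).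
  by rewrite fe; exact: fR.
rewrite -(card_in_imset finj); apply: subset_leq_card.
apply/subsetP => x /imsetP [a aA ->]; rewrite inE.
by apply/exists_inP; exists a => //; apply: fR.
Qed.

(* A nonempty set of vertices of an acyclic digraph contains a vertex with no
   arc coming from the set: take one with fewest ancestors. *)
Lemma acyclic_source (V : finType) (D : rel V) : acyclic D ->
  forall C : {set V}, C != set0 -> exists2 w, w \in C & forall u, u \in C -> ~~ D u w.
Proof.
move=> acyc C /set0Pn [w0 w0C].
pose anc (y : V) := [set z | connect D z y].
case: (arg_minnP (fun w => #|anc w|) w0C) => w wC wmin.
exists w => // u uC; apply/negP => Duw.
have lt : #|anc u| < #|anc w|.
  apply: proper_card; rewrite properE; apply/andP; split.
    apply/subsetP => z; rewrite !inE => zu.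
    by apply: connect_trans zu (connect1 Duw).
  apply/subsetPn; exists w; first by rewrite inE connect0.
  by rewrite inE; apply: acyc.
by move: (wmin u uC); rewrite leqNgt lt.
Qed.

Lemma acyclic_rank (V : finType) (D : rel V) (phi : V -> nat) :
  (forall x y, D x y -> phi x < phi y) -> acyclic D.
Proof.
move=> H x y Dxy; apply/negP => /connectP [p pth lst].
have le z q : path D z q -> phi z <= phi (last z q).
  elim: q z => [|a q IH] z //= /andP [Dza pq].
  exact: leq_trans (ltnW (H _ _ Dza)) (IH _ pq).
by move: (le _ _ pth); rewrite -lst leqNgt (H _ _ Dxy).
Qed.

Lemma ex_least_nat (P : nat -> Prop) :
  (exists n, P n) -> exists n, P n /\ forall m, P m -> n <= m.
Proof.
case=> n0; elim: n0 {-2}n0 (leqnn n0) => [|N IH] n le Pn.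
  by exists n; split => // m _; move: le; rewrite leqn0 => /eqP ->.
case: (classic (exists m, m < n /\ P m)) => [[m [mn Pm]] | nex].
  by apply: (IH m) => //; rewrite -ltnS; apply: leq_trans mn le.
exists n; split => // m Pm; rewrite leqNgt; apply/negP => mn; apply: nex; by exists m.
Qed.

Lemma phylogeny_numberP (T : finType) (e : rel T) : (exists k, has_phylo_digraph e k) ->
  has_phylo_digraph e (phylogeny_number e) /\
  forall k, has_phylo_digraph e k -> phylogeny_number e <= k.
Proof.
move=> ex; exact: (epsilon_spec (inhabits 0%N)
  (fun p => has_phylo_digraph e p /\ forall k, has_phylo_digraph e k -> (p <= k)%N)
  (ex_least_nat ex)).
Qed.

Lemma connect_exit (T : finType) (R : rel T) (S : {set T}) x y :
  connect R x y -> x \in S -> y \notin S -> exists u v, [/\ u \in S, v \notin S & R u v].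
Proof.
case/connectP => p; elim: p x => [|a p IH] x /=; first by move=> _ -> ->.
case/andP => Rxa pth yE xS yS.
case: (boolP (a \in S)) => aS; first exact: (IH a pth yE aS yS).
by exists x, a.
Qed.

Section SimpleGraph.
Variable T : finType.
Variable e : rel T.
Hypothesis e_sym : symmetric e.
Hypothesis e_irr : irreflexive e.

Lemma cliqueP (A : {set T}) :
  reflect (forall x y, x \in A -> y \in A -> x != y -> e x y) (is_clique e A).
Proof.
apply: (iffP forallP) => [H x y xA yA xy | H x].
  by move: (H x); rewrite xA /= => /forallP /(_ y); rewrite yA xy.
apply/implyP => xA; apply/forallP => y; apply/implyP => yA; apply/implyP.
exact: H.
Qed.

Lemma edge_neq (u v : T) : e u v -> u != v.
Proof. by apply: contraTneq => ->; rewrite e_irr. Qed.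

Lemma set2_subset (u v : T) (A : {set T}) : u \in A -> v \in A -> [set u; v] \subset A.
Proof. by move=> uA vA; rewrite subUset !sub1set uA vA. Qed.

Lemma edge_set2 (u v : T) : ([set u; v] \in edge_set e) = e u v.
Proof.
rewrite inE cards2.
apply/andP/idP => [[h /cliqueP H] | euv].
  have uv : u != v by move: h; case: (u != v).
  by apply: H; rewrite ?inE ?eqxx ?orbT.
split; first by rewrite (edge_neq euv).
apply/cliqueP => x y; rewrite !inE => /orP[] /eqP -> /orP[] /eqP -> //;
  by rewrite ?eqxx // e_sym.
Qed.

Lemma edge_setP (g : {set T}) :
  g \in edge_set e -> exists u v, [/\ e u v, u != v & g = [set u; v]].
Proof.
rewrite inE => /andP [/cards2P [u [v [uv ->]]] /cliqueP H].
exists u, v; split => //; apply: H => //; rewrite !inE eqxx ?orbT //.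
Qed.

Lemma edge_card2 (g : {set T}) : g \in edge_set e -> #|g| = 2.
Proof. by rewrite inE => /andP [/eqP]. Qed.

Lemma in_set3 (a b c x : T) : x \in [set a; b; c] -> [\/ x = a, x = b | x = c].
Proof.
by rewrite !inE => /orP[/orP[]|] /eqP ->; [constructor 1|constructor 2|constructor 3].
Qed.

Lemma in_set4 (a b c d x : T) :
  x \in [set a; b; c; d] -> [\/ x = a, x = b, x = c | x = d].
Proof.
by rewrite !inE => /orP[/orP[/orP[]|]|] /eqP ->;
  [constructor 1|constructor 2|constructor 3|constructor 4].
Qed.

Lemma cards3 (a b c : T) : a != b -> b != c -> a != c -> #|[set a; b; c]| = 3.
Proof. by move=> ab bc ac; rewrite -setUA cardsU1 cards2 bc !inE negb_or ab ac. Qed.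

Lemma cards4 (a b c d : T) : a != b -> a != c -> a != d -> b != c -> b != d -> c != d ->
  #|[set a; b; c; d]| = 4.
Proof.
move=> ab ac ad bc bd cd.
by rewrite -!setUA cardsU1 setUA cards3 // !inE !negb_or ab ac ad.
Qed.

Lemma cards3_neq (a b c : T) : #|[set a; b; c]| = 3 -> [/\ a != b, b != c & a != c].
Proof.
move=> h; split; apply/negP => /eqP E; move: h; rewrite E.
- by rewrite -setUA setUA setUid cards2; case: (_ != _).
- by rewrite -setUA setUid cards2; case: (_ != _).
- by rewrite -setUA (setUC [set b]) setUA setUid cards2; case: (_ != _).
Qed.

Lemma triangle3 (a b c : T) : ([set a; b; c] \in triangles e) = [&& e a b, e b c & e a c].
Proof.
rewrite inE; apply/andP/idP => [[/eqP c3 /cliqueP H] | /and3P [ab bc ac]].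
  case: (cards3_neq c3) => nab nbc nac.
  by rewrite !H // !inE eqxx ?orbT.
split; first by rewrite cards3 // edge_neq.
apply/cliqueP => x y /in_set3 [] -> /in_set3 [] -> //;
  by rewrite ?eqxx // e_sym.
Qed.

Lemma triangle_through (D : {set T}) (a b : T) :
  D \in triangles e -> a \in D -> b \in D -> a != b ->
  exists z, [/\ D = [set a; b; z], e a b, e a z & e b z].
Proof.
rewrite inE => /andP [/eqP c3 /cliqueP H] aD bD ab.
have : #|D :\: [set a; b]| == 1 by rewrite cardsDS ?set2_subset // c3 cards2 ab.
case/cards1P => z Hz.
have : z \in D :\: [set a; b] by rewrite Hz set11.
rewrite !inE negb_or => /andP [/andP [za zb] zD].
have DE : D = [set a; b; z].
  apply/esym/card_subset_eq; first by rewrite subUset set2_subset // sub1set.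
  by rewrite c3 cards3 // eq_sym.
by exists z; split => //; apply: H => //; rewrite eq_sym.
Qed.

Lemma triangle_form (D : {set T}) : D \in triangles e ->
  exists a b c, [/\ D = [set a; b; c], e a b, e b c & e a c].
Proof.
move=> Dt; move: (Dt); rewrite inE => /andP [/eqP c3 _].
have : 1 < #|D| by rewrite c3.
case/card_gt1P => a [b [aD bD ab]].
case: (triangle_through Dt aD bD ab) => z [-> eab eaz ebz].
by exists a, b, z.
Qed.

Definition pairs (W : {set T}) : {set {set T}} := [set f : {set T} | f \subset W & #|f| == 2].
Definition edges_in (W : {set T}) : {set {set T}} := [set f in edge_set e | f \subset W].

Lemma in_edges_in (W f : {set T}) : (f \in edges_in W) = (f \in edge_set e) && (f \subset W).
Proof. by rewrite /edges_in [in LHS]inE. Qed.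

Lemma in_pairs (W f : {set T}) : (f \in pairs W) = (f \subset W) && (#|f| == 2).
Proof. by rewrite /pairs inE. Qed.

Lemma card_pairs (W : {set T}) : #|pairs W| = 'C(#|W|, 2).
Proof. exact: cards_draws. Qed.

Lemma set2_pairs (W : {set T}) u v : u \in W -> v \in W -> u != v -> [set u; v] \in pairs W.
Proof. by move=> uW vW uv; rewrite in_pairs cards2 uv set2_subset. Qed.

Lemma pairsP (W f : {set T}) :
  f \in pairs W -> exists u v, [/\ u \in W, v \in W, u != v & f = [set u; v]].
Proof.
rewrite in_pairs => /andP [fW /cards2P [u [v [uv fE]]]].
by exists u, v; split => //; apply: (subsetP fW); rewrite fE !inE eqxx ?orbT.
Qed.

Lemma set2_edges_in (W : {set T}) u v : e u v -> u \in W -> v \in W -> [set u; v] \in edges_in W.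
Proof. by move=> uv uW vW; rewrite in_edges_in edge_set2 uv set2_subset. Qed.

Lemma edges_in_triangle (D : {set T}) : D \in triangles e -> edges_in D = pairs D.
Proof.
rewrite inE => /andP [_ /cliqueP H]; apply/setP => g.
rewrite in_edges_in in_pairs; apply/andP/andP => [[gE gD] | [gD g2]].
  by rewrite gD edge_card2.
split => //; rewrite inE g2; apply/cliqueP => x y xg yg.
by apply: H; apply: (subsetP gD).
Qed.


Section KiteFree.
Hypothesis K4 : K4_free e.
Hypothesis Ddisj : diamonds_edge_disjoint e.

Lemma no_K4 (a b c d : T) : e a b -> e a c -> e a d -> e b c -> e b d -> e c d -> False.
Proof.
move=> ab ac ad bc bd cd.
have := K4 (cards4 (edge_neq ab) (edge_neq ac) (edge_neq ad)
                   (edge_neq bc) (edge_neq bd) (edge_neq cd)).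
move/negP; apply; apply/cliqueP => x y /in_set4 [] -> /in_set4 [] -> //;
  by rewrite ?eqxx // e_sym.
Qed.

(* kite a b c x: the vertices a, b, c, x span a diamond with spine ab (the
   edge on both triangles) and non-adjacent tips c, x. *)
Definition kite (a b c x : T) : Prop :=
  [/\ [/\ e a b, e a c, e a x, e b c & e b x], ~~ e c x & c != x].

Lemma kiteI (a b c x : T) : e a b -> e a c -> e a x -> e b c -> e b x -> c != x ->
  kite a b c x.
Proof.
move=> ab ac ax bc bx cx; split => //.
by apply/negP => cx'; apply: (no_K4 ab ac ax bc bx cx').
Qed.

Lemma in4a (a b c d : T) : a \in [set a; b; c; d]. Proof. by rewrite !inE eqxx. Qed.
Lemma in4b (a b c d : T) : b \in [set a; b; c; d]. Proof. by rewrite !inE eqxx !orbT. Qed.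
Lemma in4c (a b c d : T) : c \in [set a; b; c; d]. Proof. by rewrite !inE eqxx !orbT. Qed.
Lemma in4d (a b c d : T) : d \in [set a; b; c; d]. Proof. by rewrite !inE eqxx !orbT. Qed.

Lemma kite_diamond (a b c x : T) : kite a b c x ->
  let W := [set a; b; c; x] in
  edges_in W \in diamonds e /\ \bigcup_(f in edges_in W) f = W.
Proof.
case=> [[ab ac ax bc bx] ncx cx] W.
have W4 : #|W| = 4 by rewrite cards4 // edge_neq.
have FE : edges_in W = pairs W :\ [set c; x].
  apply/setP => f; rewrite in_edges_in in_setD1 in_pairs; apply/andP/idP.
    case=> fE fW; rewrite fW edge_card2 // eqxx !andbT.
    by apply: contraTneq fE => ->; rewrite edge_set2.
  case/andP => fcx /andP [fW f2]; rewrite fW; split => //.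
  case/cards2P: f2 fcx fW => u [v [uv ->]] fcx fW; rewrite edge_set2.
  have uW : u \in W by apply: (subsetP fW); rewrite !inE eqxx.
  have vW : v \in W by apply: (subsetP fW); rewrite !inE eqxx orbT.
  move: uv fcx.
  by case/in_set4: uW => ->; case/in_set4: vW => -> uv fcx;
    first [ done | by rewrite e_sym | by rewrite eqxx in uv | by rewrite eqxx in fcx
          | by rewrite setUC eqxx in fcx ].
have card5 : #|edges_in W| = 5.
  move: (cardsD1 [set c; x] (pairs W)).
  by rewrite set2_pairs ?in4c ?in4d // card_pairs W4 FE => -[].
have UE : \bigcup_(f in edges_in W) f = W.
  apply/eqP; rewrite eqEsubset; apply/andP; split.
    by apply/bigcupsP => f; rewrite in_edges_in => /andP [].
  apply/subsetP => y yW; apply/bigcupP.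
  case/in_set4: yW => ->.
  + by exists [set a; b]; rewrite ?set2_edges_in ?in4a ?in4b // !inE eqxx.
  + by exists [set a; b]; rewrite ?set2_edges_in ?in4a ?in4b // !inE eqxx orbT.
  + by exists [set a; c]; rewrite ?set2_edges_in ?in4a ?in4c // !inE eqxx orbT.
  + by exists [set a; x]; rewrite ?set2_edges_in ?in4a ?in4d // !inE eqxx orbT.
split => //; rewrite inE UE W4 card5 !eqxx !andbT.
by apply/subsetP => f; rewrite in_edges_in => /andP [].
Qed.

(* A diamond F spans 4 vertices W; being K4-free, exactly one pair {c, x} of W
   is a non-edge, so F = pairs W minus {c, x}. *)
Lemma diamond_pairs (F : {set {set T}}) : F \in diamonds e ->
  let W := \bigcup_(f in F) f in
  exists c x, [/\ c \in W, x \in W, c != x, ~~ e c x & F = pairs W :\ [set c; x]].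
Proof.
rewrite inE => /and3P [sFE /eqP F5 /eqP W4] W.
have sFP : F \subset pairs W.
  apply/subsetP => f fF; rewrite in_pairs edge_card2 ?(subsetP sFE) // eqxx andbT.
  exact: (bigcup_sup f fF).
case: (boolP (pairs W \subset edge_set e)) => [sPE | /subsetPn [g gP gE]].
  exfalso; have := K4 W4; move/negP; apply; apply/cliqueP => u v uW vW uv.
  by rewrite -edge_set2 (subsetP sPE) // set2_pairs.
have gF : g \notin F by apply: contra gE; apply: (subsetP sFE).
case: (pairsP gP) => c [x [cW xW cx gE']].
exists c, x; split => //; first by move: gE; rewrite gE' edge_set2.
rewrite -gE'; apply: card_subset_eq.
  apply/subsetP => f fF; rewrite in_setD1 (subsetP sFP) // andbT.
  by apply: contraNneq gF => <-.
have : #|pairs W| = #|pairs W :\ g|.+1 by rewrite (cardsD1 g) gP.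
by rewrite card_pairs W4 F5 => -[<-].
Qed.

Lemma diamond_kite (F : {set {set T}}) : F \in diamonds e ->
  exists a b c x, kite a b c x /\ F = edges_in [set a; b; c; x].
Proof.
move=> FD; case: (diamond_pairs FD) => c [x [cW xW cx ncx FE]].
move: FD; rewrite inE => /and3P [sFE _ /eqP W4].
set W := \bigcup_(f in F) f in cW xW W4 FE.
have : #|W :\: [set c; x]| == 2 by rewrite cardsDS ?set2_subset // W4 cards2 cx.
case/cards2P => a [b [ab WD]].
have : a \in W :\: [set c; x] by rewrite WD !inE eqxx.
have : b \in W :\: [set c; x] by rewrite WD !inE eqxx orbT.
rewrite !inE !negb_or => /andP [/andP [bc bx] bW] /andP [/andP [ac ax] aW].
have adj u v : u \in W -> v \in W -> u != v -> u \notin [set c; x] -> e u v.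
  move=> uW vW uv ug; rewrite -edge_set2; apply: (subsetP sFE).
  by rewrite FE in_setD1 set2_pairs // andbT; apply: contraNneq ug => <-; rewrite !inE eqxx.
have nag : a \notin [set c; x] by rewrite !inE negb_or ac ax.
have nbg : b \notin [set c; x] by rewrite !inE negb_or bc bx.
have WE : W = [set a; b; c; x].
  apply/esym/card_subset_eq; last by rewrite W4 cards4 // eq_sym.
  by apply/subsetP => y /in_set4 [] ->.
exists a, b, c, x; split; first by split => //; split; apply: adj => //; rewrite eq_sym.
rewrite -WE; apply/setP => f; rewrite in_edges_in FE in_setD1 in_pairs.
apply/andP/andP => [[fg /andP [fW f2]] | [fE fW]].
  by split => //; apply: (subsetP sFE); rewrite FE in_setD1 fg in_pairs fW f2.
rewrite fW edge_card2 // eqxx; split => //.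
by apply: contraNneq ncx => fcx; rewrite -edge_set2 -fcx.
Qed.

Lemma diamond_share_eq (F1 F2 : {set {set T}}) f : F1 \in diamonds e -> F2 \in diamonds e ->
  f \in F1 -> f \in F2 -> F1 = F2.
Proof.
move=> D1 D2 f1 f2; apply/eqP; apply/negPn/negP => ne.
have : f \in F1 :&: F2 by rewrite inE f1 f2.
by rewrite (disjoint_setI0 (Ddisj D1 D2 ne)) inE.
Qed.

Lemma kite_share_eq (a b c x a' b' c' x' : T) (f : {set T}) :
  kite a b c x -> kite a' b' c' x' ->
  f \in edges_in [set a; b; c; x] -> f \in edges_in [set a'; b'; c'; x'] ->
  [set a; b; c; x] = [set a'; b'; c'; x'].
Proof.
move=> /kite_diamond [D1 U1] /kite_diamond [D2 U2] f1 f2.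
by rewrite -U1 -U2 (diamond_share_eq D1 D2 f1 f2).
Qed.

Lemma no_three_triangles (a b c x y : T) :
  e a b -> e a c -> e b c -> e a x -> e b x -> e a y -> e b y ->
  c != x -> c != y -> x != y -> False.
Proof.
move=> ab ac bc ax bx ay byy cx cy xy.
have WE := kite_share_eq (kiteI ab ac ax bc bx cx) (kiteI ab ac ay bc byy cy)
  (set2_edges_in ab (in4a _ _ _ _) (in4b _ _ _ _))
  (set2_edges_in ab (in4a _ _ _ _) (in4b _ _ _ _)).
have : x \in [set a; b; c; y] by rewrite -WE in4d.
case/in_set4 => xE.
- by move: ax; rewrite xE e_irr.
- by move: bx; rewrite xE e_irr.
- by move: cx; rewrite xE eqxx.
- by move: xy; rewrite xE eqxx.
Qed.

Lemma no_two_shared_edges (a b c x y : T) : e a b -> e b c -> e a c -> e a x -> e b x ->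
  x != c -> e b y -> e c y -> y != a -> False.
Proof.
move=> ab bc ac ax bx xc byy cy ya.
have C1 : kite a b c x by apply: kiteI; rewrite // eq_sym.
have C2 : kite b c a y by apply: kiteI; rewrite // ?(e_sym b a) ?(e_sym c a) // eq_sym.
have WE := kite_share_eq C1 C2 (set2_edges_in ab (in4a _ _ _ _) (in4b _ _ _ _))
  (set2_edges_in ab (in4c _ _ _ _) (in4a _ _ _ _)).
have : x \in [set b; c; a; y] by rewrite -WE in4d.
case: C1 => _ ncx _.
case/in_set4 => xE.
- by move: bx; rewrite xE e_irr.
- by move: xc; rewrite xE eqxx.
- by move: ax; rewrite xE e_irr.
- by move: ncx; rewrite xE cy.
Qed.

Definition triangles_on (g : {set T}) : {set {set T}} := [set D in triangles e | g \subset D].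

Lemma in_triangles_on (g D : {set T}) :
  (D \in triangles_on g) = (D \in triangles e) && (g \subset D).
Proof. by rewrite [in LHS]inE. Qed.

Lemma triangles_on_set2 (D : {set T}) (a b : T) : D \in triangles_on [set a; b] ->
  a != b -> exists z, [/\ D = [set a; b; z], e a b, e a z & e b z].
Proof.
rewrite in_triangles_on subUset !sub1set => /andP [Dt /andP [aD bD]].
exact: triangle_through.
Qed.

Lemma triangles_on_le2 (g : {set T}) : g \in edge_set e -> #|triangles_on g| <= 2.
Proof.
case/edge_setP => a [b [ab nab ->]].
rewrite leqNgt; apply/negP => /card_gt2P [D1 [D2 [D3 [[h1 h2 h3] [d12 d23 d31]]]]].
case: (triangles_on_set2 h1 nab) => z1 [E1 _ az1 bz1].
case: (triangles_on_set2 h2 nab) => z2 [E2 _ az2 bz2].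
case: (triangles_on_set2 h3 nab) => z3 [E3 _ az3 bz3].
apply: (no_three_triangles ab az1 bz1 az2 bz2 az3 bz3).
- by apply: contraNneq d12 => ez; rewrite E1 E2 ez.
- by apply: contraNneq d31 => ez; rewrite E1 E3 ez.
- by apply: contraNneq d23 => ez; rewrite E2 E3 ez.
Qed.

Definition private_edge (D g : {set T}) : bool :=
  [&& g \in edge_set e, g \subset D & [forall D' in triangles e, (g \subset D') ==> (D' == D)]].

(* Every triangle has a private edge: by no_two_shared_edges, at most one
   edge of a triangle lies on another triangle. *)
Lemma private_edge_exists (D : {set T}) : D \in triangles e -> exists g, private_edge D g.
Proof.
move=> Dt; case: (triangle_form Dt) => a [b [c [DE ab bc ac]]].
have aD : a \in D by rewrite DE !inE eqxx.
have bD : b \in D by rewrite DE !inE eqxx orbT.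
have cD : c \in D by rewrite DE !inE eqxx orbT.
pose shared u v := [exists D' in triangles_on [set u; v], D' != D].
have privateI u v : e u v -> u \in D -> v \in D -> ~~ shared u v -> private_edge D [set u; v].
  move=> uv uD vD nsh; rewrite /private_edge edge_set2 uv set2_subset //=.
  apply/forall_inP => D' t'; apply/implyP => s'; apply: contraNT nsh => n'.
  by apply/exists_inP; exists D' => //; rewrite in_triangles_on t' s'.
case: (boolP (shared a b)) => [/exists_inP [D1 h1 n1] | ?]; last first.
  by exists [set a; b]; apply: privateI.
case: (boolP (shared b c)) => [/exists_inP [D2 h2 n2] | ?]; last first.
  by exists [set b; c]; apply: privateI.
case: (triangles_on_set2 h1 (edge_neq ab)) => x [E1 _ ax bx].
case: (triangles_on_set2 h2 (edge_neq bc)) => y [E2 _ byy cy].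
exfalso; apply: (no_two_shared_edges ab bc ac ax bx _ byy cy _).
- by apply: contraNneq n1 => xc; rewrite E1 xc DE.
- apply: contraNneq n2 => ya; rewrite E2 ya DE.
  by apply/eqP/setP => w; rewrite !inE; case: (w == a); case: (w == b); case: (w == c).
Qed.

Definition triangle_edges : {set {set T}} := [set g in edge_set e | 0 < #|triangles_on g|].
Definition spines : {set {set T}} := [set g in edge_set e | 1 < #|triangles_on g|].

Lemma card_triangle_edges_spines : #|triangle_edges| + #|spines| = 3 * tcount e.
Proof.
have L : \sum_(D in triangles e) \sum_(g in edge_set e) ((g \subset D) : nat) = 3 * tcount e.
  rewrite mulnC /tcount -sum_nat_const; apply: eq_bigr => D Dt.
  rewrite -card_sep_sum -/(edges_in D) edges_in_triangle // card_pairs.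
  by move: Dt; rewrite inE => /andP [/eqP -> _].
rewrite -L exchange_big /= /triangle_edges /spines !card_sep_sum -big_split /=.
apply: eq_bigr => g gE.
have := triangles_on_le2 gE; rewrite /triangles_on card_sep_sum.
by case: (\sum_(i in triangles e) _) => [|[|[|]]].
Qed.

Definition spine_of (W : {set T}) : {set T} :=
  [set v in W | [forall u in W, (u != v) ==> e u v]].

Lemma spine_of_kite (a b c x : T) : kite a b c x -> spine_of [set a; b; c; x] = [set a; b].
Proof.
case=> [[ab ac ax bc bx] ncx cx].
apply/setP => v; rewrite /spine_of inE.
apply/andP/idP => [[vW /forall_inP H] | vab].
  case/in_set4: vW => vE; rewrite vE ?inE ?eqxx ?orbT //.
    by move: (H x (in4d _ _ _ _)); rewrite vE eq_sym cx /= e_sym (negbTE ncx).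
  by move: (H c (in4c _ _ _ _)); rewrite vE cx /= (negbTE ncx).
have vW : v \in [set a; b; c; x] by move: vab; rewrite !inE => /orP [] ->; rewrite ?orbT.
split => //; apply/forall_inP => u /in_set4 uE; apply/implyP => uv.
move: vab uv; rewrite !inE => /orP [] /eqP ->; case: uE => ->;
  by rewrite ?eqxx // e_sym.
Qed.

Definition span (g : {set T}) : {set T} := \bigcup_(D in triangles_on g) D.

Lemma span_kite (a b c x : T) : kite a b c x -> span [set a; b] = [set a; b; c; x].
Proof.
move=> [[ab ac ax bc bx] ncx cx].
have t1 : [set a; b; c] \in triangles_on [set a; b].
  by rewrite in_triangles_on triangle3 ab bc ac subUset !sub1set !inE !eqxx !orbT.
have t2 : [set a; b; x] \in triangles_on [set a; b].
  by rewrite in_triangles_on triangle3 ab bx ax subUset !sub1set !inE !eqxx !orbT.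
apply/eqP; rewrite eqEsubset; apply/andP; split.
  apply/bigcupsP => D Dt.
  case: (triangles_on_set2 Dt (edge_neq ab)) => z [-> _ az bz].
  have zcx : (z == c) || (z == x).
    case: (boolP (z == c)) => // zc; case: (boolP (z == x)) => // zx; exfalso.
    by apply: (no_three_triangles ab ac bc ax bx az bz cx); rewrite eq_sym.
  apply/subsetP => y /in_set3 [] ->; rewrite ?in4a ?in4b //.
  by case/orP: zcx => /eqP ->; rewrite ?in4c ?in4d.
apply/subsetP => y /in_set4 [] ->; apply/bigcupP.
- by exists [set a; b; c]; rewrite // !inE eqxx.
- by exists [set a; b; c]; rewrite // !inE eqxx orbT.
- by exists [set a; b; c]; rewrite // !inE eqxx orbT.
- by exists [set a; b; x]; rewrite // !inE eqxx orbT.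
Qed.

Lemma spinesP (g : {set T}) : g \in spines ->
  exists a b c x, [/\ kite a b c x, g = [set a; b] & span g = [set a; b; c; x]].
Proof.
rewrite inE => /andP [/edge_setP [a [b [ab nab ->]]]].
case/card_gt1P => D1 [D2 [h1 h2 d12]].
case: (triangles_on_set2 h1 nab) => c [E1 _ ac bc].
case: (triangles_on_set2 h2 nab) => x [E2 _ ax bx].
have cx : c != x by apply: contraNneq d12 => cxE; rewrite E1 E2 cxE.
have C := kiteI ab ac ax bc bx cx.
by exists a, b, c, x; split => //; apply: span_kite.
Qed.

(* g |-> the edges of G inside span g maps spines bijectively onto
   diamonds; the inverse reads the spine off the kite. *)
Lemma card_spines : #|spines| = dcount e.
Proof.
pose diamond_at g := edges_in (span g).
have inj : {in spines &, injective diamond_at}.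
  move=> g1 g2 /spinesP [a [b [c [x [C1 -> W1]]]]] /spinesP [a' [b' [c' [x' [C2 -> W2]]]]].
  rewrite /diamond_at W1 W2 => eq12.
  rewrite -(spine_of_kite C1) -(spine_of_kite C2); congr spine_of.
  by rewrite -(kite_diamond C1).2 -(kite_diamond C2).2 eq12.
rewrite /dcount -(card_in_imset inj).
suff -> : diamond_at @: spines = diamonds e by [].
apply/setP => F; apply/imsetP/idP => [[g /spinesP [a [b [c [x [C _ W1]]]]] ->] | FD].
  by rewrite /diamond_at W1; case: (kite_diamond C).
case: (diamond_kite FD) => a [b [c [x [C FE]]]].
have [[ab ac ax bc bx] _ cx] := C.
exists [set a; b]; last by rewrite /diamond_at (span_kite C).
rewrite inE edge_set2 ab /=; apply/card_gt1P; exists [set a; b; c], [set a; b; x].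
rewrite !in_triangles_on !triangle3 ab ac bc ax bx !subUset !sub1set !inE !eqxx !orbT.
split => //; apply/negP => /eqP E; have : x \in [set a; b; c] by rewrite E !inE eqxx orbT.
case/in_set3 => xE.
- by move: ax; rewrite xE e_irr.
- by move: bx; rewrite xE e_irr.
- by move: cx; rewrite xE eqxx.
Qed.

Definition free_edges : {set {set T}} := edge_set e :\: triangle_edges.

Lemma card_free_edges : #|free_edges| + 3 * tcount e = #|edge_set e| + dcount e.
Proof.
rewrite -card_spines -card_triangle_edges_spines addnA; congr (_ + _).
have sTE : triangle_edges \subset edge_set e by apply/subsetP => g; rewrite inE => /andP [].
by rewrite cardsDS // subnK // subset_leq_card.
Qed.

Lemma free_edge_edge (g : {set T}) : g \in free_edges -> g \in edge_set e.
Proof. by rewrite inE => /andP []. Qed.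

Lemma free_edge_triangle (g D : {set T}) :
  g \in free_edges -> D \in triangles e -> ~~ (g \subset D).
Proof.
rewrite in_setD inE => /andP [gnTE gE] Dt; apply/negP => gD.
move: gnTE; rewrite gE -leqNgt leqn0 cards_eq0 => /eqP TS0.
have : D \in triangles_on g by rewrite in_triangles_on Dt gD.
by rewrite TS0 inE.
Qed.

Lemma free_edgeE (u v : T) : ([set u; v] \in free_edges) = eminus e u v.
Proof.
rewrite /eminus /triangle_edge; apply/idP/idP => [h | /andP [uv]].
  have uv : e u v by rewrite -edge_set2 free_edge_edge.
  rewrite uv /=; apply/existsPn => w; apply/negP => /andP [uw vw].
  have Dt : [set u; v; w] \in triangles e by rewrite triangle3 uv uw vw.
  have := free_edge_triangle h Dt; move/negP; apply.
  by rewrite subUset !sub1set !inE !eqxx !orbT.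
rewrite uv /= => /existsPn nw.
rewrite in_setD edge_set2 uv andbT inE edge_set2 uv /= -leqNgt leqn0 cards_eq0.
apply/eqP/setP => D; rewrite [RHS]inE; apply/negP => Dt.
case: (triangles_on_set2 Dt (edge_neq uv)) => z [_ _ uz vz].
by move: (nw z); rewrite uz vz.
Qed.

Lemma eminus_sym : symmetric (eminus e).
Proof. by move=> u v; rewrite -!free_edgeE setUC. Qed.

Lemma diamond_edges_in (F : {set {set T}}) : F \in diamonds e ->
  F = edges_in (\bigcup_(f in F) f).
Proof.
case/diamond_kite => a [b [c [x [C FE]]]].
by have := (kite_diamond C).2; rewrite -FE => ->.
Qed.

(* Each diamond contains two triangles sharing
   two vertices, so one of them lies outside H; different diamonds give
   different triangles since they are edge-disjoint. *)
Lemma diamond_charge (H : {set {set T}}) : H \subset triangles e ->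
  (forall D1 D2, D1 \in H -> D2 \in H -> D1 != D2 -> #|D1 :&: D2| <= 1) ->
  #|H| + dcount e <= tcount e.
Proof.
move=> sHT Hdisj.
pose inside (F : {set {set T}}) (D : {set T}) :=
  (D \in triangles e :\: H) && (D \subset \bigcup_(f in F) f).
suff : dcount e <= #|triangles e :\: H|.
  rewrite cardsDS // /tcount => h.
  by have := subset_leq_card sHT; lia.
apply: leq_trans (leq_card_rel (A := diamonds e) (R := inside) _ _) _.
- move=> F /diamond_kite [a [b [c [x [C FE]]]]].
  have [[ab ac ax bc bx] ncx cx] := C.
  rewrite /inside FE (kite_diamond C).2.
  have t1 : [set a; b; c] \in triangles e by rewrite triangle3 ab bc ac.
  have t2 : [set a; b; x] \in triangles e by rewrite triangle3 ab bx ax.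
  case: (boolP ([set a; b; c] \in H)) => h1; last first.
    by exists [set a; b; c]; rewrite in_setD h1 t1 !subUset !sub1set !inE !eqxx !orbT.
  case: (boolP ([set a; b; x] \in H)) => h2; last first.
    by exists [set a; b; x]; rewrite in_setD h2 t2 !subUset !sub1set !inE !eqxx !orbT.
  exfalso.
  have d12 : [set a; b; c] != [set a; b; x].
    apply/negP => /eqP E; have : x \in [set a; b; c] by rewrite E !inE eqxx orbT.
    case/in_set3 => xE.
    - by move: ax; rewrite xE e_irr.
    - by move: bx; rewrite xE e_irr.
    - by move: cx; rewrite xE eqxx.
  have := Hdisj _ _ h1 h2 d12.
  have sI : [set a; b] \subset [set a; b; c] :&: [set a; b; x].
    by rewrite subsetI !subUset !sub1set !inE !eqxx !orbT.
  move: (subset_leq_card sI); rewrite cards2 (edge_neq ab) /=.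
  by move=> h h'; move: (leq_trans h h').
- move=> F1 F2 D F1D F2D /andP [_ s1] /andP [Dt s2].
  move: Dt; rewrite in_setD => /andP [_ Dt].
  case: (triangle_form Dt) => p [q [r [DE pq _ _]]].
  have pD : p \in D by rewrite DE !inE eqxx.
  have qD : q \in D by rewrite DE !inE eqxx orbT.
  apply: (diamond_share_eq F1D F2D (f := [set p; q])).
    by rewrite (diamond_edges_in F1D); apply: set2_edges_in => //; apply: (subsetP s1).
  by rewrite (diamond_edges_in F2D); apply: set2_edges_in => //; apply: (subsetP s2).
- by apply: subset_leq_card; apply/subsetP => D; rewrite inE => /exists_inP [F _ /andP [] //].
Qed.

Definition components : {set {set T}} := [set [set y | connect (eminus e) x y] | x : T].

Lemma component_of (C : {set T}) w :
  C \in components -> w \in C -> C = [set y | connect (eminus e) w y].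
Proof.
case/imsetP => x _ ->; rewrite inE => xw.
apply/setP => y; rewrite !inE.
by rewrite (same_connect (sym_connect_sym eminus_sym) xw).
Qed.

Section LowerBound.
Variable k : nat.
Variable D : rel (T + 'I_k)%type.
Hypothesis D_acyclic : acyclic D.
Hypothesis D_adj : forall u v : T, u != v -> e u v = phylo_adj D (inl u) (inl v).

Definition in_nbhd (x : (T + 'I_k)%type) : {set T} := [set u | D (inl u) x || (x == inl u)].

Lemma in_nbhd_clique x u v : u \in in_nbhd x -> v \in in_nbhd x -> u != v -> e u v.
Proof.
rewrite !inE => hu hv uv; rewrite (D_adj uv) /phylo_adj.
case/orP: hu => [hu | /eqP xu]; case/orP: hv => [hv | /eqP xv].
- by apply/orP; right; apply/orP; right; apply/existsP; exists x; rewrite hu hv.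
- by rewrite -xv hu.
- by rewrite -xu hv orbT.
- by move: uv; rewrite xu in xv; case: xv => ->; rewrite eqxx.
Qed.

Lemma edge_in_nbhd u v : e u v -> exists x, (u \in in_nbhd x) && (v \in in_nbhd x).
Proof.
move=> uv; move: (uv); rewrite (D_adj (edge_neq uv)) /phylo_adj.
case/or3P => [h | h | /existsP [w /andP [h1 h2]]].
- by exists (inl v); rewrite !inE h eqxx orbT.
- by exists (inl u); rewrite !inE h eqxx orbT.
- by exists w; rewrite !inE h1 h2.
Qed.

Lemma in_nbhd_triangle x u v y : e u v -> u \in in_nbhd x -> v \in in_nbhd x ->
  y \in in_nbhd x -> y \notin [set u; v] -> [set u; v; y] \in triangles e.
Proof.
move=> uv ux vx yx yuv; rewrite triangle3 uv.
move: yuv; rewrite !inE negb_or => /andP [yu yv].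
by rewrite (in_nbhd_clique vx yx) 1?eq_sym // (in_nbhd_clique ux yx) // eq_sym.
Qed.

(* Each free edge is exactly some neighbourhood: a larger clique containing
   it would put it on a triangle. *)
Lemma in_nbhd_free_edge g : g \in free_edges -> exists x, in_nbhd x = g.
Proof.
move=> gF; case/edge_setP: (free_edge_edge gF) => u [v [uv nuv gE]].
case: (edge_in_nbhd uv) => x /andP [ux vx]; exists x.
apply/esym/card_subset_eq; first by rewrite gE set2_subset.
rewrite gE cards2 nuv; apply: contraT; rewrite -ltnNge => gt2.
have : 0 < #|in_nbhd x :\: [set u; v]|.
  rewrite cardsD; have := subset_leq_card (subsetIr (in_nbhd x) [set u; v]).
  by rewrite cards2 nuv /=; move: gt2; lia.
case/card_gt0P => y; rewrite in_setD => /andP [yuv yx].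
have := free_edge_triangle gF (in_nbhd_triangle uv ux vx yx yuv).
by rewrite gE subUset !sub1set !inE !eqxx !orbT.
Qed.

Lemma in_nbhd_private (Dl g : {set T}) x :
  private_edge Dl g -> g \subset in_nbhd x -> in_nbhd x \subset Dl.
Proof.
case/and3P => gE gD /forall_inP H gx; apply/subsetP => y yx.
case: (boolP (y \in g)) => yg; first exact: (subsetP gD).
case/edge_setP: gE gD H gx yg => u [v [uv nuv ->]] gD H gx yg.
have ux : u \in in_nbhd x by apply: (subsetP gx); rewrite !inE eqxx.
have vx : v \in in_nbhd x by apply: (subsetP gx); rewrite !inE eqxx orbT.
have := H _ (in_nbhd_triangle uv ux vx yx yg).
by rewrite subUset !sub1set !inE !eqxx !orbT => /eqP <-; rewrite !inE eqxx orbT.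
Qed.

Definition free_tops : {set (T + 'I_k)%type} :=
  [set x | [exists g in free_edges, in_nbhd x == g]].
Definition triangle_tops : {set (T + 'I_k)%type} :=
  [set x | [exists Dl in triangles e, [exists g, private_edge Dl g && (g \subset in_nbhd x)]]].
Definition component_source (C : {set T}) (x : (T + 'I_k)%type) : bool :=
  [exists w, [&& x == inl w, w \in C & [forall u in C, ~~ D (inl u) (inl w)]]].
Definition component_tops : {set (T + 'I_k)%type} :=
  [set x | [exists C in components, component_source C x]].

Lemma card_free_tops : #|free_edges| <= #|free_tops|.
Proof.
apply: leq_card_rel => [g /in_nbhd_free_edge [x <-] | g g' x _ _ /eqP <- /eqP //].
by exists x.
Qed.

(* By in_nbhd_private, a neighbourhood holds private edges of one triangle only. *)
Lemma card_triangle_tops : tcount e <= #|triangle_tops|.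
Proof.
apply: leq_card_rel => [Dl Dt | Dl Dl' x Dt Dt' /existsP [g /andP [pg gx]]].
  case: (private_edge_exists Dt) => g pg; move: (pg) => /and3P [gE _ _].
  case/edge_setP: gE => u [v [uv _ gE]].
  case: (edge_in_nbhd uv) => x /andP [ux vx]; exists x; apply/existsP; exists g.
  by rewrite pg gE set2_subset.
case/existsP => g' /andP [pg' g'x].
move: pg => /and3P [_ _ /forall_inP H].
apply/esym/eqP; apply: (implyP (H Dl' Dt')).
exact: subset_trans gx (in_nbhd_private pg' g'x).
Qed.

Lemma card_component_tops : #|components| <= #|component_tops|.
Proof.
apply: leq_card_rel => [C Cc | C C' x Cc C'c].
  have : [set inl u | u in C] != set0 :> {set (T + 'I_k)%type}.
    case/imsetP: (Cc) => x0 _ C0; apply/set0Pn; exists (inl x0); apply/imsetP; exists x0 => //.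
    by rewrite C0 inE connect0.
  case/(acyclic_source D_acyclic) => w /imsetP [w1 w1C ->] H.
  exists (inl w1); apply/existsP; exists w1; rewrite eqxx w1C /=.
  by apply/forall_inP => u uC; apply: H; apply/imsetP; exists u.
move=> /existsP [w /and3P [/eqP xw wC _]] /existsP [w' /and3P [/eqP xw' wC' _]].
have ww' : w = w' by apply: (@inl_inj _ 'I_k); rewrite -xw -xw'.
by rewrite (component_of Cc wC) (component_of C'c wC') ww'.
Qed.

Lemma free_triangle_tops_disjoint : free_tops :&: triangle_tops = set0.
Proof.
apply/setP => x; rewrite !inE; apply/negP.
case/andP => /exists_inP [g gF /eqP xg] /exists_inP [Dl Dt /existsP [g' /andP [pg' g'x]]].
move: (pg') => /and3P [g'E g'D _].
have gg' : g' = g.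
  apply: card_subset_eq; first by rewrite -xg.
  by rewrite !edge_card2 // free_edge_edge.
by have := free_edge_triangle gF Dt; rewrite -gg' g'D.
Qed.

(* A source of V(G) has a one-vertex neighbourhood, hence is neither kind of top. *)
Lemma source_not_tops : 0 < #|T| ->
  exists x, x \notin free_tops :|: triangle_tops.
Proof.
case/card_gt0P => t0 _.
have : [set inl u | u : T] != set0 :> {set (T + 'I_k)%type}.
  by apply/set0Pn; exists (inl t0); apply/imsetP; exists t0.
case/(acyclic_source D_acyclic) => _ /imsetP [w _ ->] wsrc.
have Sw : in_nbhd (inl w) = [set w].
  apply/setP => y; rewrite !inE (inj_eq (@inl_inj _ _)) eq_sym.
  have yin : (inl y : (T + 'I_k)%type) \in [set inl u | u : T] by apply/imsetP; exists y.
  by rewrite (negbTE (wsrc _ yin)).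
exists (inl w); rewrite !inE negb_or; apply/andP; split.
  apply/exists_inP => -[g gF /eqP Sg].
  by move: (edge_card2 (free_edge_edge gF)); rewrite -Sg Sw cards1.
apply/exists_inP => -[Dl _ /existsP [g /andP [/and3P [gE _ _] gS]]].
by move: (subset_leq_card gS); rewrite Sw cards1 edge_card2.
Qed.

(* The neighbourhood of a component source w is not a free edge {w, y}:
   the arc y -> w would come from the component of w. *)
Lemma free_component_tops_disjoint : free_tops :&: component_tops = set0.
Proof.
apply/setP => x; rewrite !inE; apply/negP.
case/andP => /exists_inP [g gF /eqP Sg] /exists_inP [C Cc /existsP [w /and3P [/eqP xw wC /forall_inP H]]].
have wS : w \in in_nbhd x by rewrite xw !inE eqxx orbT.
have gE := free_edge_edge gF.
move: gE Sg gF => /edge_setP [u [v [uv nuv ->]]] Sg gF.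
have [y [yS yw gE]] : exists y, [/\ y \in in_nbhd x, y != w & [set u; v] = [set w; y]].
  move: wS; rewrite Sg !inE => /orP [] /eqP wE.
    by exists v; rewrite !inE eqxx orbT wE eq_sym.
  by exists u; rewrite !inE eqxx wE setUC.
move: yS; rewrite xw !inE (inj_eq (@inl_inj _ _)) eq_sym (negbTE yw) orbF => Dyw.
have yC : y \in C by rewrite (component_of Cc wC) inE connect1 // -free_edgeE -gE.
by move: (H y yC); rewrite Dyw.
Qed.

Lemma lower_bounds : 0 < #|T| ->
  #|free_edges| + tcount e + 1 <= #|T| + k /\ #|free_edges| + ncomp (eminus e) <= #|T| + k.
Proof.
move=> Tn; have cardD : #|{: T + 'I_k}| = #|T| + k by rewrite card_sum card_ord.
have [x0 x0tops] := source_not_tops Tn.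
split.
  have := max_card (x0 |: (free_tops :|: triangle_tops)).
  rewrite cardD cardsU1 x0tops add1n cardsU free_triangle_tops_disjoint cards0 subn0.
  have := card_free_tops; have := card_triangle_tops; lia.
have := max_card (free_tops :|: component_tops).
rewrite cardD cardsU free_component_tops_disjoint cards0 subn0.
exact: leq_trans (leq_add card_free_tops card_component_tops).
Qed.

End LowerBound.

(* A phylogeny digraph from a clique cover: each vertex v of G receives arcs
   from the clique K v of lower-ranked vertices containing it, and each extra
   clique of Cs gets a new vertex receiving arcs from its members. *)
Lemma phylo_of_cliques (rk : T -> nat) (K : T -> {set T}) (Cs : seq {set T}) :
  (forall v, v \in K v) ->
  (forall v, is_clique e (K v)) ->
  (forall v u, u \in K v -> u != v -> rk u < rk v) ->
  (forall C, C \in Cs -> is_clique e C) ->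
  (forall u v, e u v -> (exists w, (u \in K w) && (v \in K w)) \/
                        (exists2 C, C \in Cs & (u \in C) && (v \in C))) ->
  has_phylo_digraph e (size Cs).
Proof.
move=> Kv Kc Krk Cc cover.
pose D (x y : (T + 'I_(size Cs))%type) : bool :=
  match x, y with
  | inl u, inl v => (u \in K v) && (u != v)
  | inl u, inr i => u \in nth set0 Cs i
  | inr _, _ => false
  end.
exists D; split => //.
  pose M := (\max_(v : T) rk v).+1.
  apply: (acyclic_rank (phi := fun x => if x is inl v then rk v else M)).
  case=> [u|i] [v|j] //=; first by case/andP => uK uv; apply: Krk.
  by move=> _; rewrite ltnS; apply: (leq_bigmax_cond u).
move=> u v uv; rewrite /phylo_adj /=; apply/idP/idP => [euv | ].
  case: (cover u v euv) => [[w /andP [uw vw]] | [C CC /andP [uC vC]]].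
    case: (eqVneq w v) => [wv | wv].
      by subst w; apply/or3P; constructor 1; apply/andP; split.
    case: (eqVneq w u) => [wu | wu].
      by subst w; apply/or3P; constructor 2; apply/andP; split; rewrite // eq_sym.
    apply/orP; right; apply/orP; right; apply/existsP; exists (inl w) => /=.
    by rewrite uw vw eq_sym wu eq_sym wv.
  apply/orP; right; apply/orP; right; apply/existsP.
  have iC : index C Cs < size Cs by rewrite index_mem.
  by exists (inr (Ordinal iC)) => /=; rewrite nth_index // uC vC.
case/or3P => [/andP [uK _] | /andP [vK _] | /existsP [[w|i] /andP [h1 h2]]].
- by move/cliqueP: (Kc v); apply.
- by move/cliqueP: (Kc u); apply => //; rewrite eq_sym.
- by move: h1 h2 => /= /andP [uK _] /andP [vK _]; move/cliqueP: (Kc w); apply.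
- by have /Cc/cliqueP := mem_nth set0 (ltn_ord i); apply.
Qed.

Definition cover_cliques : {set {set T}} := free_edges :|: triangles e.

Lemma cover_clique_clique C : C \in cover_cliques -> is_clique e C.
Proof. by rewrite inE => /orP [/free_edge_edge | ]; rewrite inE => /andP []. Qed.

Lemma card_cover_cliques : #|cover_cliques| = #|free_edges| + tcount e.
Proof.
rewrite cardsU; suff -> : free_edges :&: triangles e = set0 by rewrite cards0 subn0.
apply/setP => C; rewrite inE [RHS]inE; apply/negP => /andP [/free_edge_edge CE].
by rewrite inE edge_card2 // => /andP [].
Qed.

Lemma cover_cliques_cover u v : e u v -> exists C, [/\ C \in cover_cliques, u \in C & v \in C].
Proof.
move=> uv; case: (boolP (eminus e u v)) => h.
  by exists [set u; v]; rewrite inE free_edgeE h !inE !eqxx orbT.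
move: h; rewrite /eminus /triangle_edge uv /= negbK => /existsP [w /andP [uw vw]].
by exists [set u; v; w]; rewrite inE triangle3 uv vw uw orbT !inE !eqxx !orbT.
Qed.

Section UpperBound.
Variable rk : T -> nat.
Variable Z : {set T}.
Hypothesis ranked : forall v, v \notin Z ->
  (exists u, eminus e u v /\ rk u < rk v) \/
  (exists D, [/\ D \in triangles e, v \in D & forall y, y \in D -> y != v -> rk y < rk v]).

Definition top_of (v : T) (C : {set T}) : bool :=
  [&& C \in cover_cliques, v \in C & [forall y in C, (y != v) ==> (rk y < rk v)]].

Definition top_clique (v : T) : {set T} := odflt [set v] [pick C | top_of v C].
Definition topped : {set T} := [set v | [exists C, top_of v C]].

Lemma top_cliqueP v : v \in topped -> top_of v (top_clique v).
Proof.
rewrite inE => /existsP [C gC]; rewrite /top_clique; case: pickP => [C' //|H].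
by rewrite H in gC.
Qed.

Lemma top_clique_mem v : v \in top_clique v.
Proof. by rewrite /top_clique; case: pickP => [C /and3P [] //| _]; rewrite /= set11. Qed.

Lemma top_clique_clique v : is_clique e (top_clique v).
Proof.
rewrite /top_clique; case: pickP => [C /and3P [CK _ _] | _ /=]; first exact: cover_clique_clique.
by apply/cliqueP => x y /set1P -> /set1P ->; rewrite eqxx.
Qed.

Lemma top_clique_rank v u : u \in top_clique v -> u != v -> rk u < rk v.
Proof.
rewrite /top_clique; case: pickP => [C /and3P [_ _ /forall_inP H] /= uC uv | _ /= /set1P ->].
  by move: (H u uC); rewrite uv.
by rewrite eqxx.
Qed.

(* A vertex is the top of its clique, so different vertices top different cliques. *)
Lemma top_clique_inj : {in topped &, injective top_clique}.
Proof.
move=> v w _ _ Kvw; apply/eqP; apply/negPn/negP => vw.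
have h1 := top_clique_rank (u := w) (v := v); rewrite Kvw top_clique_mem eq_sym vw in h1.
have h2 := top_clique_rank (u := v) (v := w); rewrite -Kvw top_clique_mem vw in h2.
by move: (ltn_trans (h1 isT isT) (h2 isT isT)); rewrite ltnn.
Qed.

Lemma not_Z_topped : ~: Z \subset topped.
Proof.
apply/subsetP => v; rewrite !inE => vZ; apply/existsP.
case: (ranked vZ) => [[u [uv ruv]] | [D [Dt vD HD]]].
  exists [set u; v]; rewrite /top_of inE free_edgeE uv !inE eqxx orbT /=.
  by apply/forall_inP => y /set2P [] ->; rewrite ?ruv ?implybT ?eqxx.
exists D; rewrite /top_of inE Dt orbT vD /=.
by apply/forall_inP => y yD; apply/implyP; apply: HD.
Qed.

(* The cover cliques not topped by a vertex become extra vertices. *)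
Lemma upper_bound : exists k, has_phylo_digraph e k /\ k + #|T| <= #|free_edges| + tcount e + #|Z|.
Proof.
pose Cs := enum (cover_cliques :\: top_clique @: topped).
have sKM : top_clique @: topped \subset cover_cliques.
  by apply/subsetP => C /imsetP [v vM ->]; case/and3P: (top_cliqueP vM).
have Csc C : C \in Cs -> is_clique e C.
  by rewrite mem_enum inE => /andP [_]; apply: cover_clique_clique.
have cover u v : e u v -> (exists w, (u \in top_clique w) && (v \in top_clique w)) \/
                          (exists2 C, C \in Cs & (u \in C) && (v \in C)).
  move=> /cover_cliques_cover [C [CK uC vC]].
  case: (boolP (C \in top_clique @: topped)) => [/imsetP [w _ CE] | CnK].
    by left; exists w; rewrite -CE uC vC.
  by right; exists C; rewrite ?mem_enum ?in_setD ?CnK ?uC ?vC.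
exists (size Cs); split.
  exact: phylo_of_cliques top_clique_mem top_clique_clique top_clique_rank Csc cover.
have : #|T| <= #|topped| + #|Z|.
  by rewrite -(cardsC Z) addnC leq_add2r subset_leq_card // not_Z_topped.
have : #|topped| <= #|cover_cliques|.
  by rewrite -(card_in_imset top_clique_inj) subset_leq_card.
rewrite -cardE cardsDS // (card_in_imset top_clique_inj).
have := card_cover_cliques; lia.
Qed.

End UpperBound.

Section Greedy.
Variable r : T.

Definition grounded (S : {set T}) (rk : T -> nat) (v : T) : Prop :=
  (exists u, [/\ u \in S, eminus e u v & rk u < rk v]) \/
  (exists D, [/\ D \in triangles e, v \in D &
              forall y, y \in D -> y != v -> y \in S /\ rk y < rk v]).

(* Invariant of the greedy process after processing S with ranks rk: every
   processed vertex except r and the exceptional ones in Z3 is grounded;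
   each exceptional vertex v is charged a triangle ch v meeting S in two
   vertices, charged triangles pairwise share at most one vertex, and
   exceptional vertices only occur when G^- is disconnected. *)
Record greedy_state (S : {set T}) (rk : T -> nat) (Z3 : {set T}) (ch : T -> {set T}) : Prop :=
  { state_root : r \in S;
    state_Z3 : Z3 \subset S;
    state_root_Z3 : r \notin Z3;
    state_rank : forall x, x \in S -> rk x < #|S|;
    state_grounded : forall v, v \in S -> v != r -> v \notin Z3 -> grounded S rk v;
    state_charge : forall v, v \in Z3 -> ch v \in triangles e /\ 1 < #|ch v :&: S|;
    state_charge_disj : forall v w, v \in Z3 -> w \in Z3 -> v != w -> #|ch v :&: ch w| <= 1;
    state_disconnected : Z3 != set0 -> ~ (forall x y, connect (eminus e) x y) }.

Lemma grounded_mono (S S' : {set T}) rk rk' v : S \subset S' ->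
  (forall x, x \in S -> rk' x = rk x) -> v \in S -> grounded S rk v -> grounded S' rk' v.
Proof.
move=> sSS' rkE vS [[u [uS uv ruv]] | [D [Dt vD HD]]].
  by left; exists u; rewrite (subsetP sSS') // !rkE.
right; exists D; split => // y yD yv; case: (HD y yD yv) => yS ryv.
by rewrite (subsetP sSS') // !rkE.
Qed.

Definition extend_rank (S : {set T}) (rk : T -> nat) (v : T) : T -> nat :=
  fun x => if x == v then #|S| else rk x.

Lemma greedy_step (S : {set T}) rk Z3 ch (v : T) Z3' ch' :
  greedy_state S rk Z3 ch -> v \notin S ->
  let S' := v |: S in
  let rk' := extend_rank S rk v in
  (Z3' = Z3 /\ grounded S' rk' v) \/
  (Z3' = v |: Z3 /\ [/\ ch' v \in triangles e, 1 < #|ch' v :&: S'|,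
                      (forall w, w \in Z3 -> #|ch' v :&: ch w| <= 1) &
                      ~ (forall x y, connect (eminus e) x y)]) ->
  (forall w, w \in Z3 -> ch' w = ch w) ->
  greedy_state S' rk' Z3' ch'.
Proof.
move=> [Ir IZ IrZ Irk Igood Ich Idisj Iconn] vS S' rk' H chE.
have sS : S \subset S' by apply/subsetP => x xS; rewrite in_setU1 xS orbT.
have rkE x : x \in S -> rk' x = rk x.
  by move=> xS; rewrite /rk' /extend_rank; case: eqP => // xv; move: vS; rewrite -xv xS.
have rk'S x : x \in S' -> rk' x < #|S'|.
  rewrite in_setU1 cardsU1 vS => /orP [/eqP -> | xS]; first by rewrite /rk' /extend_rank eqxx.
  by rewrite rkE // ltnS ltnW // Irk.
have good' u : u \in S -> u != r -> u \notin Z3 -> grounded S' rk' u.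
  by move=> uS ur uZ; apply: (grounded_mono sS rkE uS); apply: Igood.
have chS w : w \in Z3 -> ch' w \in triangles e /\ 1 < #|ch' w :&: S'|.
  move=> wZ; rewrite chE //; case: (Ich w wZ) => wt wc; split => //.
  by apply: leq_trans wc _; apply: subset_leq_card; apply: setIS.
have disj u w : u \in Z3 -> w \in Z3 -> u != w -> #|ch' u :&: ch' w| <= 1.
  by move=> uZ wZ uw; rewrite !chE //; exact: Idisj.
have Ir' : r \in S' by rewrite in_setU1 Ir orbT.
case: H => [[-> gv] | [-> [vt vc vd nc]]]; split => //.
- exact: subset_trans IZ sS.
- by move=> u; rewrite in_setU1 => /orP [/eqP -> // | ]; apply: good'.
- by apply: setUSS => //; rewrite sub1set in_setU1 eqxx.
- by rewrite in_setU1 negb_or IrZ andbT; apply: contraNneq vS => <-.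
- move=> u; rewrite !in_setU1 negb_or => /orP [/eqP -> | uS] ur /andP [uv uZ].
    by rewrite eqxx in uv.
  exact: good'.
- by move=> u; rewrite in_setU1 => /orP [/eqP -> // | ]; apply: chS.
- move=> u w; rewrite !in_setU1 => /orP [/eqP -> | uZ] /orP [/eqP -> | wZ]; rewrite ?eqxx //.
  + by move=> _; rewrite (chE _ wZ); apply: vd.
  + by move=> _; rewrite (chE _ uZ) setIC; apply: vd.
  + exact: disj.
Qed.

Lemma triangle_last_vertex (S D : {set T}) : D \in triangles e -> 1 < #|D :&: S| ->
  ~~ (D \subset S) -> exists v, [/\ v \notin S, v \in D & forall y, y \in D -> y != v -> y \in S].
Proof.
move=> Dt c2 /subsetPn [v vD vS]; exists v; split => // y yD yv.
have D3 : #|D| = 3 by move: Dt; rewrite inE => /andP [/eqP].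
have E : D :&: S = D :\ v.
  apply: card_subset_eq.
    apply/subsetP => z; rewrite !inE => /andP [zD zS]; rewrite zD andbT.
    by apply: contraNneq vS => <-.
  by move: (cardsD1 v D); rewrite vD D3 add1n => -[<-].
have : y \in D :\ v by rewrite !inE yv yD.
by rewrite -E inE => /andP [].
Qed.

(* If some unprocessed vertex is grounded, process it.
   Otherwise an edge uv leaves S (G is connected), it is a triangle edge
   (else v would be grounded), and v becomes exceptional, charged with a
   triangle uvw; no earlier charged triangle shares two vertices with it,
   since triangles with two processed vertices are fully processed. *)
Lemma greedy_extend (S : {set T}) rk Z3 ch w0 :
  (forall x y, connect e x y) -> greedy_state S rk Z3 ch -> w0 \notin S ->
  exists v rk' Z3' ch', v \notin S /\ greedy_state (v |: S) rk' Z3' ch'.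
Proof.
move=> Gc I vS0; have [Ir _ _ Irk _ Ich _ _] := I.
have vneq v x : v \notin S -> x \in S -> x != v by move=> vS xS; apply: contraNneq vS => <-.
have ground v : v \notin S -> grounded (v |: S) (extend_rank S rk v) v ->
    exists v rk' Z3' ch', v \notin S /\ greedy_state (v |: S) rk' Z3' ch'.
  by move=> vS gv; exists v, (extend_rank S rk v), Z3, ch; split => //; apply: greedy_step I vS _ _ => //; left.
case: (boolP [exists v, (v \notin S) && [exists u in S, eminus e u v]]) => [c1 | nc1].
  case/existsP: c1 => v /andP [vS /exists_inP [u uS uv]].
  apply: (ground v vS); left; exists u.
  by rewrite in_setU1 uS orbT /extend_rank eqxx (negbTE (vneq v u vS uS)) Irk.
pose topped_tri v D := [&& D \in triangles e, v \in D & [forall y in D, (y != v) ==> (y \in S)]].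
case: (boolP [exists v, (v \notin S) && [exists D, topped_tri v D]]) => [c2 | nc2].
  case/existsP: c2 => v /andP [vS /existsP [D /and3P [Dt vD /forall_inP HD]]].
  apply: (ground v vS); right; exists D; split => // y yD yv.
  have yS : y \in S by move: (HD y yD); rewrite yv.
  by rewrite in_setU1 yS orbT /extend_rank eqxx (negbTE (vneq v y vS yS)) Irk.
have [u [v [uS vS uv]]] := connect_exit (Gc r w0) Ir vS0.
have : triangle_edge e u v.
  apply: contraNT nc1 => nt; apply/existsP; exists v; rewrite vS /=.
  by apply/exists_inP; exists u => //; rewrite /eminus uv nt.
rewrite /triangle_edge uv /= => /existsP [w /andP [uw vw]].
pose D := [set u; v; w].
have Dt : D \in triangles e by rewrite triangle3 uv vw uw.
have closed D' : D' \in triangles e -> 1 < #|D' :&: S| -> D' \subset S.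
  move=> D't c; apply: contraNT nc2 => nsub.
  case: (triangle_last_vertex D't c nsub) => v' [v'S v'D H]; apply/existsP; exists v'.
  rewrite v'S /=; apply/existsP; exists D'; rewrite /topped_tri D't v'D /=.
  by apply/forall_inP => y yD; apply/implyP; exact: H.
pose ch' x := if x == v then D else ch x.
exists v, (extend_rank S rk v), (v |: Z3), ch'; split => //; apply: (greedy_step I vS); last first.
  by move=> x xZ; rewrite /ch' (negbTE (vneq v x vS (subsetP (state_Z3 I) x xZ))).
right; split => //; rewrite /ch' eqxx; split => //.
- have sI : [set u; v] \subset D :&: (v |: S).
    by rewrite subsetI !subUset !sub1set !inE !eqxx uS !orbT.
  by move: (subset_leq_card sI); rewrite cards2 (edge_neq uv).
- move=> x xZ; rewrite leqNgt; apply/negP => c.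
  case: (Ich x xZ) => xt xc.
  have DS : D \subset S.
    apply: (closed _ Dt); apply: leq_trans c _; apply: subset_leq_card.
    by apply: setIS; exact: closed.
  by move: vS; rewrite (subsetP DS) // !inE eqxx orbT.
- move=> emc; have [u' [v' [u'S v'S em]]] := connect_exit (emc r w0) Ir vS0.
  move/existsP: nc1; apply; exists v'; rewrite v'S /=; apply/exists_inP; by exists u'.
Qed.

Lemma greedy_complete (Gc : forall x y, connect e x y) :
  forall n S rk Z3 ch, #|~: S| = n -> greedy_state S rk Z3 ch ->
  exists rk' Z3' ch', greedy_state setT rk' Z3' ch'.
Proof.
elim=> [|n IH] S rk Z3 ch cn I.
  have E : ~: S = set0 by apply/eqP; rewrite -cards_eq0 cn.
  have SE : S = setT by rewrite -[S]setCK E setC0.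
  by exists rk, Z3, ch; rewrite -SE.
have [w0 w0S] : exists w0, w0 \notin S.
  have /card_gt0P [w0] : 0 < #|~: S| by rewrite cn.
  by rewrite inE; exists w0.
have [v [rk' [Z3' [ch' [vS I']]]]] := greedy_extend Gc I w0S.
apply: (IH _ _ _ _ _ I').
have -> : ~: (v |: S) = ~: S :\ v by apply/setP => x; rewrite !inE negb_or.
by move: (cardsD1 v (~: S)); rewrite cn inE vS add1n => -[].
Qed.

(* The outcome: a ranking for upper_bound with exceptional set Z = {r} + Z3,
   where |Z| + d <= 1 + t by diamond_charge, and Z = {r} if G^- is connected. *)
Lemma greedy_ranking (Gc : forall x y, connect e x y) :
  exists (rk : T -> nat) (Z : {set T}), [/\ (forall v, v \notin Z ->
     (exists u, eminus e u v /\ rk u < rk v) \/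
     (exists D, [/\ D \in triangles e, v \in D & forall y, y \in D -> y != v -> rk y < rk v])),
     #|Z| + dcount e <= 1 + tcount e &
     ((forall x y, connect (eminus e) x y) -> #|Z| <= 1)].
Proof.
have I0 : greedy_state [set r] (fun _ => 0) set0 (fun _ => set0).
  split => //.
  - by rewrite set11.
  - by rewrite sub0set.
  - by rewrite inE.
  - by move=> x _; rewrite cards1.
  - by move=> v /set1P ->; rewrite eqxx.
  - by move=> v; rewrite inE.
  - by move=> v w; rewrite inE.
  - by rewrite eqxx.
have [rk [Z3 [ch [_ _ IrZ _ Igood Ich Idisj Iconn]]]] := greedy_complete Gc (erefl _) I0.
exists rk, (r |: Z3); split.
- move=> v; rewrite in_setU1 negb_or => /andP [vr vZ].
  case: (Igood v (in_setT v) vr vZ) => [[u [_ uv ruv]] | [D [Dt vD HD]]].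
    by left; exists u.
  by right; exists D; split => // y yD yv; case: (HD y yD yv).
- have chinj : {in Z3 &, injective ch}.
    move=> v w vZ wZ E; apply/eqP; apply/negPn/negP => vw.
    have := Idisj v w vZ wZ vw; rewrite E setIid.
    by case: (Ich w wZ) => wt _; move: wt; rewrite inE => /andP [/eqP -> _].
  have charged : ch @: Z3 \subset triangles e.
    by apply/subsetP => D /imsetP [v vZ ->]; case: (Ich v vZ).
  have := diamond_charge charged; rewrite card_in_imset // cardsU1 IrZ add1n; apply.
  move=> D1 D2 /imsetP [v vZ ->] /imsetP [w wZ ->] ne; apply: Idisj => //.
  by apply: contraNneq ne => ->.
- move=> emc; have Z0 : Z3 = set0.
    by apply/eqP; apply: contraT => nz; case: (Iconn nz emc).
  by rewrite Z0 setU0 cards1.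
Qed.

End Greedy.

Lemma ncomp1_connected : ncomp (eminus e) = 1 -> forall x y, connect (eminus e) x y.
Proof.
rewrite /ncomp -/components => /eqP /cards1P [C0 CE] x y.
have cx : [set z | connect (eminus e) x z] \in components by apply/imsetP; exists x.
have cy : [set z | connect (eminus e) y z] \in components by apply/imsetP; exists y.
rewrite CE !inE in cx cy.
have : y \in [set z | connect (eminus e) y z] by rewrite inE connect0.
by rewrite (eqP cy) -(eqP cx) inE.
Qed.

Lemma phylogeny_estimates (Gc : forall x y, connect e x y) (Tn : 0 < #|T|) :
  let p := phylogeny_number e in
  [/\ #|free_edges| + 3 * tcount e = #|edge_set e| + dcount e,
      #|free_edges| + tcount e + 1 <= #|T| + p,
      #|free_edges| + ncomp (eminus e) <= #|T| + p &
      exists z, [/\ p + #|T| <= #|free_edges| + tcount e + z, z + dcount e <= 1 + tcount e &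
                    (ncomp (eminus e) = 1 -> z <= 1)]].
Proof.
move=> p; case/card_gt0P: (Tn) => r _.
have [rk [Z [HZ cZ cZ1]]] := greedy_ranking r Gc.
have [k [Hk bk]] := upper_bound HZ.
have [[D [acyc adj _]] pmin] := phylogeny_numberP (ex_intro _ k Hk).
have [lb1 lb2] := lower_bounds acyc adj Tn.
split => //; first exact: card_free_edges.
exists #|Z|; split => //; last by move/ncomp1_connected.
by apply: leq_trans bk; rewrite leq_add2r pmin.
Qed.

End KiteFree.
End SimpleGraph.

Unset Implicit Arguments.
Set Strict Implicit.
Import Order.TTheory GRing.Theory Num.Theory.
Local Open Scope ring_scope.

Theorem mainTheorem9 (T : finType) (e : rel T)
    (e_sym : symmetric e) (e_irr : irreflexive e)
    (T_nonempty : (0 < #|T|)%N)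
    (G_conn : forall x y : T, connect e x y)
    (G_K4free : K4_free e)
    (G_diam : diamonds_edge_disjoint e) :
  let E := (#|edge_set e|%:Z) in
  let V := (#|T|%:Z) in
  let t := (tcount e)%:Z in
  let d := (dcount e)%:Z in
  let p := (phylogeny_number e)%:Z in
  [/\ E - V - 2 * t + d + 1 <= p,
      p <= E - V - t + 1,
      ((ncomp (eminus e) = 1)%N -> p = E - V - 2 * t + d + 1) &
      ((ncomp (eminus e))%:Z = 2 * t - d + 1 -> p = E - V - t + 1)].
Proof.
move=> E V t d p.
have [count lower lower_comp [z [upper charge conn]]] :=
  phylogeny_estimates e_sym e_irr G_K4free G_diam G_conn T_nonempty.
rewrite /E /V /t /d /p; split.
- lia.
- lia.
- by move=> /[dup] /conn; lia.
- lia.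
Qed.
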